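(* Let $V$ be a finite-dimensional vector space with a linear (rational) action of an algebraic group $G$. Then a closed subvariety $X\subset V$ is $G$-symmetric if and only if it is stable under $\operatorname{End}_G(V)$, i.e. $\phi(X)\subset X$ for all $\phi\in\operatorname{End}_G(V)$.
   Context: $\Bbbk$ is algebraically closed of characteristic $0$. Vector fields on $V$ are identified with polynomial maps $\xi\colon V\to V$ ($\xi(v)\in V=T_vV$); such $\xi$ is $G$-invariant if $\xi(gv)=g\xi(v)$ for all $g\in G$, $v\in V$. A closed subvariety $X\subset V$ is $G$-symmetric if $\xi(x)\in T_xX$ for all $x\in X$ and all $G$-invariant vector fields $\xi$ on $V$. $\operatorname{End}_G(V)$ is the set of $G$-equivariant polynomial maps $V\to V$. *)

From HB Require Import structures.
From mathcomp Require Import all_boot all_order all_algebra.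
From mathcomp Require Import mpoly.
Set Implicit Arguments. Unset Strict Implicit. Unset Printing Implicit Defensive.
Import GRing.Theory.
Local Open Scope ring_scope.

Section Defs.
Variables (k : fieldType) (n : nat).

Definition coords (v : 'cV[k]_n) : 'I_n -> k := fun i => v i 0.

Definition zariski_closed (X : 'cV[k]_n -> Prop) : Prop :=
  exists S : {mpoly k[n]} -> Prop,
    forall v, X v <-> (forall p, S p -> p.@[coords v] = 0).

(* Polynomial maps V -> V (= polynomial vector fields on V). *)
Definition polynomial_map (f : 'cV[k]_n -> 'cV[k]_n) : Prop :=
  exists P : 'I_n -> {mpoly k[n]}, forall v i, f v i 0 = (P i).@[coords v].

(* A linear algebraic group acting on V: a Zariski-closed subgroup of GL_n(k),
   acting by matrix multiplication. *)
Definition closed_subgroup_GL (G : 'M[k]_n -> Prop) : Prop :=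
  [/\ (forall g, G g -> g \in unitmx),
      G 1%:M,
      (forall g h, G g -> G h -> G (g *m h)),
      (forall g, G g -> G (invmx g)) &
      exists S : {mpoly k[n * n]} -> Prop,
        forall g, G g <-> (g \in unitmx /\
          forall p, S p -> p.@[fun ij : 'I_(n * n) => mxvec g 0 ij] = 0)].

(* G-equivariant polynomial map (equivalently, G-invariant vector field). *)
Definition G_equivariant (G : 'M[k]_n -> Prop) (f : 'cV[k]_n -> 'cV[k]_n) :=
  polynomial_map f /\ forall g v, G g -> f (g *m v) = g *m f v.

Definition vanishing_ideal (X : 'cV[k]_n -> Prop) (p : {mpoly k[n]}) : Prop :=
  forall y, X y -> p.@[coords y] = 0.

Definition tangent_space (X : 'cV[k]_n -> Prop) (x w : 'cV[k]_n) : Prop :=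
  forall p, vanishing_ideal X p ->
    \sum_(i < n) (p^`M(i)).@[coords x] * w i 0 = 0.

Definition G_symmetric (G : 'M[k]_n -> Prop) (X : 'cV[k]_n -> Prop) : Prop :=
  forall xi, G_equivariant G xi -> forall x, X x -> tangent_space X x (xi x).

End Defs.

(* If X is stable under End_G(V) and xi is a G-invariant vector field, then
   id + t xi is G-equivariant for every t, so X contains the line through x
   in direction xi x; differentiating along it at t = 0 gives tangency.
   Conversely, let X be G-symmetric, phi equivariant and Psi = phi - id.  The
   ideal I(X) is stable under the derivation along any invariant field, and
   since G acts linearly the derivative of an invariant field along another
   one is again invariant.  By the Leibniz rule, an induction on m then shows
   d^m p (Psi, ..., Psi) in I(X) for p in I(X).  Up to m! these are the Taylor
   coefficients at 0 of t |-> p (x + t Psi x), which therefore vanishes in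
   characteristic 0; at t = 1 this is p (phi x) = 0. *)

From HB Require Import structures.
From mathcomp Require Import all_boot all_order all_algebra.
From mathcomp Require Import mpoly.
Set Implicit Arguments. Unset Strict Implicit. Unset Printing Implicit Defensive.
Import GRing.Theory.
Local Open Scope ring_scope.

Section DerivAlong.
Variables (R : comNzRingType) (n : nat).
Implicit Types (p q : {mpoly R[n]}) (e c : 'I_n -> {mpoly R[n]}).

Definition deriv_along e p : {mpoly R[n]} := \sum_i e i * p^`M(i).

Lemma deriv_along_is_additive e : zmod_morphism (deriv_along e).
Proof.
move=> p q; rewrite /deriv_along -sumrB; apply: eq_bigr => i _.
by rewrite mderivB mulrBr.
Qed.

HB.instance Definition _ e :=
  GRing.isZmodMorphism.Build {mpoly R[n]} {mpoly R[n]} (deriv_along e)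
    (deriv_along_is_additive e).

Lemma deriv_alongM e p q :
  deriv_along e (p * q) = deriv_along e p * q + p * deriv_along e q.
Proof.
rewrite /deriv_along mulr_suml mulr_sumr -big_split; apply: eq_bigr => i _ /=.
by rewrite mderivM mulrDr !mulrA [p * _]mulrC.
Qed.

Lemma deriv_alongC e a : deriv_along e a%:MP = 0.
Proof. by rewrite /deriv_along big1 // => i _; rewrite mderivC mulr0. Qed.

Lemma deriv_alongXU e i : deriv_along e 'X_i = e i.
Proof.
rewrite /deriv_along (bigD1 i) //= big1 => [|j /negbTE nji].
  rewrite mderivX; have -> : (U_(i) - U_(i) = 0)%MM.
    by apply/mnmP => j; rewrite mnmBE subnn mnm0E.
  by rewrite mpolyX0 mnm1E eqxx scale1r mulr1 addr0.
by rewrite mderivX mnm1E eq_sym nji scale0r mulr0.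
Qed.

Definition const_field (w : 'I_n -> R) : 'I_n -> {mpoly R[n]} :=
  fun i => (w i)%:MP.

Definition deriv_field e c : 'I_n -> {mpoly R[n]} :=
  fun j => deriv_along e (c j).

(* [mdiff [:: c_1; ...; c_m] p] is the m-th differential d^m p applied to
   (c_1, ..., c_m), the coefficients c_j being left undifferentiated. *)
Fixpoint mdiff (l : seq ('I_n -> {mpoly R[n]})) p : {mpoly R[n]} :=
  if l is c :: l' then \sum_i c i * mdiff l' p^`M(i) else p.

Lemma mdiff_cons c l p : mdiff (c :: l) p = \sum_i c i * mdiff l p^`M(i).
Proof. by []. Qed.

Lemma mdiff_swap e c l p : mdiff [:: e, c & l] p = mdiff [:: c, e & l] p.
Proof.
rewrite /=; under eq_bigr do rewrite mulr_sumr.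
rewrite exchange_big; apply: eq_bigr => j _; rewrite mulr_sumr.
by apply: eq_bigr => i _; rewrite mulrCA mderiv_comm.
Qed.

Lemma deriv_along_mdiff e l p :
  deriv_along e (mdiff l p) = mdiff (e :: l) p +
    \sum_(j < size l)
      mdiff (set_nth (fun=> 0) l j (deriv_field e (nth (fun=> 0) l j))) p.
Proof.
elim: l p => [|c l IH] p; first by rewrite big_ord0 addr0.
rewrite mdiff_swap big_ord_recl (raddf_sum (deriv_along e)) /=.
under eq_bigr do rewrite deriv_alongM IH mulrDr mulr_sumr.
rewrite !big_split addrCA; congr (_ + (_ + _)).
  by apply: eq_bigr => i _; rewrite mulr_sumr.
by rewrite exchange_big; apply: eq_bigr => i _; rewrite mulr_sumr.
Qed.

Lemma meval_mdiff y l p :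
  (mdiff l p).@[y] =
  (mdiff [seq const_field (fun i => (c i).@[y]) | c <- l] p).@[y].
Proof.
elim: l p => [//|c l IH] p /=; rewrite !rmorph_sum; apply: eq_bigr => i _ /=.
by rewrite !mevalM IH mevalC.
Qed.

End DerivAlong.

Section LinePoly.
Variables (R : comNzRingType) (n : nat).
Implicit Types (p q : {mpoly R[n]}) (e : 'I_n -> {mpoly R[n]}).
Implicit Types (x w : 'I_n -> R).

Definition line_poly x w : {mpoly R[n]} -> {poly R} :=
  mmap (@polyC R) (fun i => (x i)%:P + w i *: 'X).

HB.instance Definition _ x w :=
  GRing.RMorphism.copy (line_poly x w) (line_poly x w).

Lemma horner_line_poly x w p s :
  (line_poly x w p).[s] = p.@[fun i => x i + s * w i].
Proof.
rewrite /line_poly /mmap horner_sum mevalE; apply: eq_bigr => m _.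
rewrite hornerCM /mmap1 horner_prod; congr (_ * _); apply: eq_bigr => i _.
by rewrite horner_exp hornerD hornerC hornerZ hornerX mulrC.
Qed.

Lemma line_polyC x w a : line_poly x w a%:MP = a%:P.
Proof. exact: mmapC. Qed.

Lemma line_polyXU x w i : line_poly x w 'X_i = (x i)%:P + w i *: 'X.
Proof. by rewrite /line_poly mmapX mmap1U. Qed.

Lemma deriv_line_poly x w p :
  (line_poly x w p)^`() = line_poly x w (deriv_along (const_field w) p).
Proof.
pose P q :=
  (line_poly x w q)^`() = line_poly x w (deriv_along (const_field w) q).
have PD a b : P a -> P b -> P (a + b) by rewrite /P !raddfD /= => -> ->.
have PM a b : P a -> P b -> P (a * b).
  by rewrite /P deriv_alongM rmorphM derivM => -> ->; rewrite rmorphD !rmorphM.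
have PC a : P a%:MP by rewrite /P deriv_alongC line_polyC derivC raddf0.
have PC1 : P 1 by rewrite -mpolyC1; apply: PC.
have PXU i : P 'X_i.
  by rewrite /P deriv_alongXU line_polyXU derivD derivC derivZ derivX add0r
    line_polyC alg_polyC.
have PX m : P 'X_[m].
  rewrite mpolyXE_id; elim/big_ind: _ => [||i _]; [exact: PC1 | exact: PM |].
  by elim: (m i) => [|e IH]; [exact: PC1 | rewrite exprS; apply: PM].
elim/mpolyind: p => [|a m p _ _ Hp]; first by rewrite -mpolyC0; apply: PC.
by apply: PD => //; rewrite -mul_mpolyC; apply: PM.
Qed.

Lemma derivn_line_poly x w m p :
  (line_poly x w p)^`(m) = line_poly x w (mdiff (nseq m (const_field w)) p).
Proof.
elim: m p => [|m IH] p; first by rewrite derivn0.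
rewrite derivSn deriv_line_poly -[nseq m.+1 _]/(_ :: nseq m _) mdiff_cons.
rewrite /deriv_along !rmorph_sum raddf_sum; apply: eq_bigr => i _ /=.
by rewrite !rmorphM /= -IH line_polyC !mul_polyC derivnZ.
Qed.

Lemma eq_line_poly x1 x2 w1 w2 :
  x1 =1 x2 -> w1 =1 w2 -> line_poly x1 w1 =1 line_poly x2 w2.
Proof.
move=> eqx eqw p; apply: eq_bigr => m _; congr (_ * _).
by apply: mmap1_eq => i; rewrite eqx eqw.
Qed.

Lemma derivn_line_poly0 x w m p :
  ((line_poly x w p)^`(m)).[0] = (mdiff (nseq m (const_field w)) p).@[x].
Proof.
rewrite derivn_line_poly horner_line_poly.
by apply: meval_eq => i; rewrite mul0r addr0.
Qed.

Lemma meval_deriv_along e p x :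
  (deriv_along e p).@[x] = ((line_poly x (fun i => (e i).@[x]) p)^`()).[0].
Proof.
by rewrite -derivn1 derivn_line_poly0; exact: (meval_mdiff x [:: e]).
Qed.

End LinePoly.

Lemma poly_eq0_of_derivn_root0 (F : idomainType) (Q : {poly F}) :
  [pchar F] =i pred0 -> (forall m, root Q^`(m) 0) -> Q = 0.
Proof.
move=> /pcharf0P charF0 hQ; apply/polyP => m; rewrite coef0.
have /eqP := hQ m; rewrite horner_coef0 coef_derivn addn0 ffactnn -mulr_natr.
by move/eqP; rewrite mulf_eq0 charF0 gtn_eqF ?fact_gt0 // orbF => /eqP.
Qed.

(* Otherwise [(P1 - P2) * 'X + 1] would be a nonconstant polynomial without
   roots. *)
Lemma closed_polyfun_inj (k : closedFieldType) (P1 P2 : {poly k}) :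
  (forall s, P1.[s] = P2.[s]) -> P1 = P2.
Proof.
move=> eqP12; apply/eqP; rewrite -subr_eq0; apply/negPn/negP => nz.
have : size ((P1 - P2) * 'X + 1%:P) != 1%N.
  by rewrite size_MXaddC (negbTE nz) /= eqSS size_poly_eq0.
case/closed_rootP => a; rewrite /root hornerMXaddC hornerD hornerN !eqP12 subrr.
by rewrite mul0r add0r oner_eq0.
Qed.

Section Equivariance.
Variables (k : closedFieldType) (n : nat) (G : 'M[k]_n -> Prop).
Implicit Types (e c : 'I_n -> {mpoly k[n]}) (v w : 'cV[k]_n).

Definition field_map c v : 'cV[k]_n := \col_i (c i).@[coords v].

Lemma coords_field_map c v :
  coords (field_map c v) =1 fun i => (c i).@[coords v].
Proof. by move=> i; rewrite /coords mxE. Qed.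

Lemma G_equivariant_field_map c :
  (forall g v, G g -> field_map c (g *m v) = g *m field_map c v) ->
  G_equivariant G (field_map c).
Proof. by split=> //; exists c => v i; rewrite mxE. Qed.

Lemma coords_mulmx (g : 'M[k]_n) v :
  coords (g *m v) =1 fun j => \sum_l g j l * v l 0.
Proof. by move=> j; rewrite /coords mxE. Qed.

Lemma line_poly_equivariant c g v w j : G_equivariant G (field_map c) -> G g ->
  line_poly (coords (g *m v)) (coords (g *m w)) (c j) =
  \sum_l g j l *: line_poly (coords v) (coords w) (c l).
Proof.
move=> [_ eqc] Gg; apply: closed_polyfun_inj => s.
rewrite horner_line_poly horner_sum.
have -> : (c j).@[fun i => coords (g *m v) i + s * coords (g *m w) i] =
          coords (field_map c (g *m (v + s *: w))) j.
  rewrite coords_field_map; apply: meval_eq => i.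
  rewrite !coords_mulmx /= mulr_sumr -big_split; apply: eq_bigr => l _.
  by rewrite !mxE mulrDr mulrCA.
rewrite (eqc _ _ Gg) coords_mulmx; apply: eq_bigr => l _.
rewrite hornerZ horner_line_poly mxE; congr (_ * _); apply: meval_eq => i.
by rewrite /coords !mxE.
Qed.

Lemma G_equivariant_deriv_field e c :
  G_equivariant G (field_map e) -> G_equivariant G (field_map c) ->
  G_equivariant G (field_map (deriv_field e c)).
Proof.
move=> eqe eqc; apply: G_equivariant_field_map => g v Gg; apply/matrixP => j z.
rewrite (ord1 z) !mxE /deriv_field meval_deriv_along.
have ew : (fun i => (e i).@[coords (g *m v)]) =1 coords (g *m field_map e v).
  by move=> i; rewrite -(eqe.2 _ _ Gg) coords_field_map.
rewrite (eq_line_poly (frefl _) ew) line_poly_equivariant //.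
rewrite raddf_sum horner_sum.
apply: eq_bigr => l _ /=; rewrite linearZ hornerZ mxE meval_deriv_along.
by rewrite (eq_line_poly (frefl _) (coords_field_map e v)).
Qed.

End Equivariance.

Section Symmetric.
Variables (k : closedFieldType) (n : nat).
Variables (G : 'M[k]_n -> Prop) (X : 'cV[k]_n -> Prop).
Hypothesis symX : G_symmetric G X.

Lemma vanishing_deriv_along e q : G_equivariant G (field_map e) ->
  vanishing_ideal X q -> vanishing_ideal X (deriv_along e q).
Proof.
move=> eqe Iq y Xy; rewrite -[RHS](symX eqe Xy Iq) rmorph_sum.
by apply: eq_bigr => i _; rewrite /= mevalM mxE mulrC.
Qed.

Lemma vanishing_mdiff l p :
  (forall j, (j < size l)%N -> G_equivariant G (field_map (nth (fun=> 0) l j))) ->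
  vanishing_ideal X p -> vanishing_ideal X (mdiff l p).
Proof.
move eq_m: (size l) => m.
elim: m l eq_m p => [|m IH] [|e l] // [size_l] p eql Ip.
have eql' j : (j < m)%N -> G_equivariant G (field_map (nth (fun=> 0) l j)).
  by move=> jm; apply: (eql j.+1).
have -> : mdiff (e :: l) p = deriv_along e (mdiff l p) -
    \sum_(j < size l)
      mdiff (set_nth (fun=> 0) l j (deriv_field e (nth (fun=> 0) l j))) p.
  by rewrite deriv_along_mdiff addrK.
have eqe : G_equivariant G (field_map e) by apply: (eql 0%N).
have Ie := vanishing_deriv_along eqe (IH l size_l p eql' Ip).
move=> y Xy; rewrite mevalB Ie // sub0r rmorph_sum big1 ?oppr0 // => j _ /=.
apply: IH Xy => //; first by rewrite size_set_nth (maxn_idPr (ltn_ord j)).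
move=> i im; rewrite nth_set_nth /=; case: eqP => _; last exact: eql'.
by apply: G_equivariant_deriv_field => //; apply: eql'; rewrite -size_l.
Qed.

End Symmetric.

Lemma stable_of_symmetric (k : closedFieldType) (n : nat) (G : 'M[k]_n -> Prop)
    (X : 'cV[k]_n -> Prop) :
  [pchar k] =i pred0 -> zariski_closed X -> G_symmetric G X ->
  forall phi, G_equivariant G phi -> forall x, X x -> X (phi x).
Proof.
move=> char0 [S defX] symX phi [[P defP] eqphi] x Xx.
pose Psi i := P i - 'X_i.
have field_map_Psi v : field_map Psi v = phi v - v.
  by apply/matrixP => i z; rewrite (ord1 z) !mxE mevalB mevalXU -defP.
have eqPsi : G_equivariant G (field_map Psi).
  apply: G_equivariant_field_map => g v Gg.
  by rewrite !field_map_Psi (eqphi _ _ Gg) mulmxBr.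
apply/defX => p Sp; have Ip : vanishing_ideal X p by move=> y /defX; apply.
pose Q := line_poly (coords x) (fun i => (Psi i).@[coords x]) p.
have <- : Q.[1] = p.@[coords (phi x)].
  rewrite horner_line_poly; apply: meval_eq => i.
  by rewrite mul1r mevalB mevalXU /coords defP addrC subrK.
suff -> : Q = 0 by rewrite horner0.
apply: poly_eq0_of_derivn_root0 char0 _ => m; apply/eqP.
rewrite derivn_line_poly0.
rewrite -(map_nseq m (fun c => const_field (fun i => (c i).@[coords x]))).
rewrite -meval_mdiff.
by apply: (vanishing_mdiff symX) Xx => // j; rewrite size_nseq nth_nseq => ->.
Qed.

Lemma symmetric_of_stable (k : closedFieldType) (n : nat) (G : 'M[k]_n -> Prop)
    (X : 'cV[k]_n -> Prop) :
  (forall phi, G_equivariant G phi -> forall x, X x -> X (phi x)) ->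
  G_symmetric G X.
Proof.
move=> stableX xi [[P defP] eqxi] x Xx p Ip.
pose Q := line_poly (coords x) (coords (xi x)) p.
have Q0 : Q = 0.
  apply: closed_polyfun_inj => t; rewrite horner0 horner_line_poly.
  have eq_shift : G_equivariant G (fun v => v + t *: xi v).
    split; last by move=> g v Gg; rewrite (eqxi _ _ Gg) mulmxDr scalemxAr.
    exists (fun i => 'X_i + t *: P i) => v i.
    by rewrite !mxE mevalD mevalXU mevalZ defP.
  rewrite -(Ip _ (stableX _ eq_shift x Xx)); apply: meval_eq => i.
  by rewrite /coords !mxE.
have := meval_deriv_along (const_field (coords (xi x))) p (coords x).
rewrite (eq_line_poly (frefl _) (fun i => mevalC _ _)) -/Q Q0 deriv0 horner0.
move=> tangent; rewrite -[RHS]tangent /deriv_along rmorph_sum.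
by apply: eq_bigr => i _; rewrite /= mevalM mevalC mulrC.
Qed.

Theorem theorem4p2p2 (k : closedFieldType) (hchar : [pchar k] =i pred0)
  (n : nat) (G : 'M[k]_n -> Prop) (hG : closed_subgroup_GL G)
  (X : 'cV[k]_n -> Prop) (hX : zariski_closed X) :
  G_symmetric G X <->
  (forall phi, G_equivariant G phi -> forall x, X x -> X (phi x)).
Proof.
split; first exact: stable_of_symmetric hchar hX.
exact: symmetric_of_stable.
Qed.
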